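(* Let $\{U_y\}_{y\in\mathbb{Z}}$ be $3\times 3$ unitary matrices $U_y=\begin{bmatrix} a_y & b_y & c_y\\ d_y & e_y & f_y\\ g_y & h_y & i_y\end{bmatrix}$ with complex entries, defining the three-state inhomogeneous quantum walk on $\mathbb{Z}$ described in the context. Let $\lambda\in S^1=\{z\in\mathbb{C}:|z|=1\}$ and assume that for every $y\in\mathbb{Z}$ the quantities $a_y(\lambda-e_y)+b_yd_y$ and $h_yf_y+i_y(\lambda-e_y)$ are nonzero (so that all entries below are finite). Define, for $y\in\mathbb{Z}$, the transfer matrices $T^{(+)}_y=(t^{(+)}_{jk})_{j,k=1}^3$ and $T^{(-)}_y=(t^{(-)}_{jk})_{j,k=1}^3$ by \[ t^{(+)}_{11}=\frac{(\lambda-e_y)(\lambda^2-g_{y-1}c_y)-g_{y-1}b_yf_y}{\lambda\{a_y(\lambda-e_y)+b_yd_y\}},\quad t^{(+)}_{12}=-\frac{h_{y-1}\{b_yf_y+c_y(\lambda-e_y)\}}{\lambda\{a_y(\lambda-e_y)+b_yd_y\}},\quad t^{(+)}_{13}=-\frac{i_{y-1}\{b_yf_y+c_y(\lambda-e_y)\}}{\lambda\{a_y(\lambda-e_y)+b_yd_y\}}, \] \[ t^{(+)}_{21}=\frac{\lambda^2d_y+g_{y-1}(a_yf_y-c_yd_y)}{\lambda\{a_y(\lambda-e_y)+b_yd_y\}},\quad t^{(+)}_{22}=\frac{h_{y-1}(a_yf_y-c_yd_y)}{\lambda\{a_y(\lambda-e_y)+b_yd_y\}},\quad t^{(+)}_{23}=\frac{i_{y-1}(a_yf_y-c_yd_y)}{\lambda\{a_y(\lambda-e_y)+b_yd_y\}},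 \] \[ t^{(+)}_{31}=\frac{g_{y-1}}{\lambda},\quad t^{(+)}_{32}=\frac{h_{y-1}}{\lambda},\quad t^{(+)}_{33}=\frac{i_{y-1}}{\lambda}, \] and \[ t^{(-)}_{11}=\frac{a_{y+1}}{\lambda},\quad t^{(-)}_{12}=\frac{b_{y+1}}{\lambda},\quad t^{(-)}_{13}=\frac{c_{y+1}}{\lambda}, \] \[ t^{(-)}_{21}=-\frac{a_{y+1}(f_yg_y-i_yd_y)}{\lambda\{h_yf_y+i_y(\lambda-e_y)\}},\quad t^{(-)}_{22}=-\frac{b_{y+1}(f_yg_y-i_yd_y)}{\lambda\{h_yf_y+i_y(\lambda-e_y)\}},\quad t^{(-)}_{23}=\frac{\lambda^2f_y-c_{y+1}(f_yg_y-i_yd_y)}{\lambda\{h_yf_y+i_y(\lambda-e_y)\}}, \] \[ t^{(-)}_{31}=-\frac{a_{y+1}\{h_yd_y+g_y(\lambda-e_y)\}}{\lambda\{h_yf_y+i_y(\lambda-e_y)\}},\quad t^{(-)}_{32}=-\frac{b_{y+1}\{h_yd_y+g_y(\lambda-e_y)\}}{\lambda\{h_yf_y+i_y(\lambda-e_y)\}},\quad t^{(-)}_{33}=\frac{(\lambda-e_y)(\lambda^2-g_yc_{y+1})-h_yc_{y+1}d_y}{\lambda\{h_yf_y+i_y(\lambda-e_y)\}}. \] If $\Psi\in\mathrm{Map}(\mathbb{Z},\mathbb{C}^3)$, $\Psi(x)=[\Psi^L(x),\Psi^O(x),\Psi^R(x)]^T$, solves the eigenvalue equation $U^{(s)}\Psi=\lambda\Psi$,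 then \[ \Psi(x)=\begin{cases} T^{(+)}_xT^{(+)}_{x-1}\cdots T^{(+)}_1\Psi(0) & (x\ge 1),\\ \Psi(0) & (x=0),\\ T^{(-)}_xT^{(-)}_{x+1}\cdots T^{(-)}_{-1}\Psi(0) & (x\le -1),\end{cases} \] and the measure $\mu(x)=\|\Psi(x)\|^2=|\Psi^L(x)|^2+|\Psi^O(x)|^2+|\Psi^R(x)|^2$ $(x\in\mathbb{Z})$ is a stationary measure of the walk, i.e. $\mu\in\Sigma_s$.
   Context: The three-state quantum walk on $\mathbb{Z}$: for $x\in\mathbb{Z}$ set $U_x=P_x+R_x+Q_x$ where $P_x$ keeps only the first row $(a_x,b_x,c_x)$ of $U_x$ (other rows zero), $R_x$ keeps only the second row $(d_x,e_x,f_x)$, and $Q_x$ keeps only the third row $(g_x,h_x,i_x)$. The operator $U^{(s)}$ acts on $\Psi\in(\mathbb{C}^3)^{\mathbb{Z}}=\mathrm{Map}(\mathbb{Z},\mathbb{C}^3)$ by $(U^{(s)}\Psi)(x)=P_{x+1}\Psi(x+1)+R_x\Psi(x)+Q_{x-1}\Psi(x-1)$; the walk's time evolution is $\Psi_n=(U^{(s)})^n\Psi_0$. Equivalently, $U^{(s)}\Psi=\lambda\Psi$ means, for all $x$: $\lambda\Psi^L(x)=a_{x+1}\Psi^L(x+1)+b_{x+1}\Psi^O(x+1)+c_{x+1}\Psi^R(x+1)$, $\lambda\Psi^O(x)=d_x\Psi^L(x)+e_x\Psi^O(x)+f_x\Psi^R(x)$, $\lambda\Psi^R(x)=g_{x-1}\Psi^L(x-1)+h_{x-1}\Psi^O(x-1)+i_{x-1}\Psi^R(x-1)$.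 Let $\phi:(\mathbb{C}^3)^{\mathbb{Z}}\to[0,\infty)^{\mathbb{Z}}$, $\phi(\Psi)(x)=|\Psi^L(x)|^2+|\Psi^O(x)|^2+|\Psi^R(x)|^2$. The set of stationary measures is $\Sigma_s=\{\phi(\Psi_0): \Psi_0\in(\mathbb{C}^3)^{\mathbb{Z}},\ \phi((U^{(s)})^n\Psi_0)=\phi(\Psi_0)\text{ for all } n\ge 0\}$. *)

From HB Require Import structures.
From mathcomp Require Import all_boot all_order all_algebra.
From mathcomp Require Import complex reals.
Set Implicit Arguments. Unset Strict Implicit. Unset Printing Implicit Defensive.
Import Order.TTheory GRing.Theory Num.Theory.
Local Open Scope ring_scope.

Section QW.
Variable R : realType.
Local Notation C := (R[i]).

(* A coin field y |-> U_y; rows/cols indexed 0,1,2 so that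
   a = U 0 0, b = U 0 1, c = U 0 2, d = U 1 0, e = U 1 1, f = U 1 2,
   g = U 2 0, h = U 2 1, i = U 2 2. *)
Definition coins := int -> 'M[C]_3.

Definition unitary3 (M : 'M[C]_3) : Prop :=
  M *m (map_mx conjc M)^T = 1%:M.

Definition i0 : 'I_3 := @Ordinal 3 0 isT.
Definition i1 : 'I_3 := @Ordinal 3 1 isT.
Definition i2 : 'I_3 := @Ordinal 3 2 isT.
Definition ca (U : coins) y := U y i0 i0.
Definition cb (U : coins) y := U y i0 i1.
Definition cc (U : coins) y := U y i0 i2.
Definition cd (U : coins) y := U y i1 i0.
Definition ce (U : coins) y := U y i1 i1.
Definition cf (U : coins) y := U y i1 i2.
Definition cg (U : coins) y := U y i2 i0.
Definition ch (U : coins) y := U y i2 i1.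
Definition ci (U : coins) y := U y i2 i2.

(* States: Map(Z, C^3), Psi x is a column vector [Psi^L; Psi^O; Psi^R]. *)
Definition state := int -> 'cV[C]_3.

Definition rowpart (k : 'I_3) (M : 'M[C]_3) : 'M[C]_3 :=
  \matrix_(j, l) (if j == k then M j l else 0).
Definition Pm (U : coins) x := rowpart i0 (U x).
Definition Rm (U : coins) x := rowpart i1 (U x).
Definition Qm (U : coins) x := rowpart i2 (U x).

Definition Us (U : coins) (Psi : state) : state := fun x =>
  Pm U (x + 1) *m Psi (x + 1) + Rm U x *m Psi x + Qm U (x - 1) *m Psi (x - 1).

Definition phi (Psi : state) : int -> C := fun x =>
  `|Psi x i0 0| ^+ 2 + `|Psi x i1 0| ^+ 2 + `|Psi x i2 0| ^+ 2.

Definition Sigma_s (U : coins) (mu : int -> C) : Prop :=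
  exists Psi0 : state,
    (forall n : nat, phi (iter n (Us U) Psi0) = phi Psi0) /\ mu = phi Psi0.

Definition Tplus (U : coins) (l : C) (y : int) : 'M[C]_3 :=
  let a := ca U y in let b := cb U y in let c := cc U y in
  let d := cd U y in let e := ce U y in let f := cf U y in
  let g' := cg U (y - 1) in let h' := ch U (y - 1) in let i' := ci U (y - 1) in
  let D := l * (a * (l - e) + b * d) in
  \matrix_(j, k)
    (if j == i0 then
       (if k == i0 then ((l - e) * (l ^+ 2 - g' * c) - g' * b * f) / D
        else if k == i1 then - (h' * (b * f + c * (l - e))) / D
        else - (i' * (b * f + c * (l - e))) / D)
     else if j == i1 then
       (if k == i0 then (l ^+ 2 * d + g' * (a * f - c * d)) / D
        else if k == i1 then h' * (a * f - c * d) / D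
        else i' * (a * f - c * d) / D)
     else
       (if k == i0 then g' / l
        else if k == i1 then h' / l
        else i' / l)).

Definition Tminus (U : coins) (l : C) (y : int) : 'M[C]_3 :=
  let a' := ca U (y + 1) in let b' := cb U (y + 1) in let c' := cc U (y + 1) in
  let d := cd U y in let e := ce U y in let f := cf U y in
  let g := cg U y in let h := ch U y in let i := ci U y in
  let D := l * (h * f + i * (l - e)) in
  \matrix_(j, k)
    (if j == i0 then
       (if k == i0 then a' / l
        else if k == i1 then b' / l
        else c' / l)
     else if j == i1 then
       (if k == i0 then - (a' * (f * g - i * d)) / D
        else if k == i1 then - (b' * (f * g - i * d)) / D
        else (l ^+ 2 * f - c' * (f * g - i * d)) / D)
     else
       (if k == i0 then - (a' * (h * d + g * (l - e))) / D
        else if k == i1 then - (b' * (h * d + g * (l - e))) / D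
        else ((l - e) * (l ^+ 2 - g * c') - h * c' * d) / D)).

Fixpoint Tpos (U : coins) (l : C) (n : nat) : 'M[C]_3 :=
  match n with
  | O => 1%:M
  | S m => Tplus U l (m.+1)%:Z *m Tpos U l m
  end.

Fixpoint Tneg (U : coins) (l : C) (n : nat) : 'M[C]_3 :=
  match n with
  | O => 1%:M
  | S m => Tminus U l (- (m.+1)%:Z) *m Tneg U l m
  end.

End QW.

From HB Require Import structures.
From mathcomp Require Import all_boot all_order all_algebra.
From mathcomp Require Import complex reals.
From mathcomp Require Import ring boolp.
Import Order.TTheory GRing.Theory Num.Theory.
Local Open Scope ring_scope.

(* The eigenvalue equation couples Psi(y) to its neighbours only through
   the L-equation at y - 1 (involving Psi(y - 1) and Psi(y)), the O-equation
   at y and the R-equation at y (involving Psi(y) and Psi(y - 1)).  These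
   three equations form a 3 x 3 linear system for Psi(y) given Psi(y - 1),
   whose determinant is, up to sign, lam (a_y (lam - e_y) + b_y d_y);
   Cramer's rule gives Psi(y) = T^(+)_y Psi(y - 1).  Symmetrically, the L-
   and O-equations at y and the R-equation at y + 1 give
   Psi(y) = T^(-)_y Psi(y + 1).  Stationarity holds for any eigenvector:
   U^(s)^n Psi = lam^n Psi and |lam| = 1, so the norms |Psi(x)| never
   change. *)

Lemma solve_by_combination {F : fieldType} (k1 k2 k3 : F)
    {D v A B C x y z p1 q1 p2 q2 p3 q3 : F} :
  D != 0 -> p1 = q1 -> p2 = q2 -> p3 = q3 ->
  A * x + B * y + C * z - D * v = k1 * (p1 - q1) + k2 * (p2 - q2) + k3 * (p3 - q3) ->
  v = A / D * x + B / D * y + C / D * z.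
Proof.
move=> D_neq0 -> -> ->; rewrite !subrr !mulr0 !addr0 => /eqP; rewrite subr_eq0 => /eqP E.
by rewrite ![_ / D * _]mulrAC -!mulrDl E [D * v]mulrC mulfK.
Qed.

(* Cramer's rule in certificate form: the multipliers k1, k2, k3 used below
   are proportional to rows of the adjugate of the coefficient matrix. *)
Section ForwardSolution.
Context {F : fieldType} {l a b c d e f g h i Ly Oy Ry Lp Op Rp : F}.
Hypotheses (l_neq0 : l != 0) (D_neq0 : a * (l - e) + b * d != 0).
Hypotheses (eqL : l * Lp = a * Ly + b * Oy + c * Ry)
           (eqO : l * Oy = d * Ly + e * Oy + f * Ry)
           (eqR : l * Ry = g * Lp + h * Op + i * Rp).
Let lD_neq0 : l * (a * (l - e) + b * d) != 0. Proof. exact: mulf_neq0. Qed.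

Lemma forward_solutionL :
  Ly = ((l - e) * (l ^+ 2 - g * c) - g * b * f) / (l * (a * (l - e) + b * d)) * Lp
     + - (h * (b * f + c * (l - e))) / (l * (a * (l - e) + b * d)) * Op
     + - (i * (b * f + c * (l - e))) / (l * (a * (l - e) + b * d)) * Rp.
Proof.
apply: (solve_by_combination (l * (l - e)) (l * b)
  (b * f + c * (l - e)) lD_neq0 eqL eqO eqR); ring.
Qed.

Lemma forward_solutionO :
  Oy = (l ^+ 2 * d + g * (a * f - c * d)) / (l * (a * (l - e) + b * d)) * Lp
     + h * (a * f - c * d) / (l * (a * (l - e) + b * d)) * Op
     + i * (a * f - c * d) / (l * (a * (l - e) + b * d)) * Rp.
Proof.
apply: (solve_by_combination (l * d) (- (l * a))
  (- (a * f - c * d)) lD_neq0 eqL eqO eqR); ring.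
Qed.

Lemma forward_solutionR : Ry = g / l * Lp + h / l * Op + i / l * Rp.
Proof.
by apply: (solve_by_combination 0 0 (-1) l_neq0 eqL eqO eqR); ring.
Qed.

End ForwardSolution.

Section BackwardSolution.
Context {F : fieldType} {l a b c d e f g h i Ly Oy Ry Lp Op Rp : F}.
Hypotheses (l_neq0 : l != 0) (D_neq0 : h * f + i * (l - e) != 0).
Hypotheses (eqL : l * Ly = a * Lp + b * Op + c * Rp)
           (eqO : l * Oy = d * Ly + e * Oy + f * Ry)
           (eqR : l * Rp = g * Ly + h * Oy + i * Ry).
Let lD_neq0 : l * (h * f + i * (l - e)) != 0. Proof. exact: mulf_neq0. Qed.

Lemma backward_solutionL : Ly = a / l * Lp + b / l * Op + c / l * Rp.
Proof.
by apply: (solve_by_combination (-1) 0 0 l_neq0 eqL eqO eqR); ring.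
Qed.

Lemma backward_solutionO :
  Oy = - (a * (f * g - i * d)) / (l * (h * f + i * (l - e))) * Lp
     + - (b * (f * g - i * d)) / (l * (h * f + i * (l - e))) * Op
     + (l ^+ 2 * f - c * (f * g - i * d)) / (l * (h * f + i * (l - e))) * Rp.
Proof.
apply: (solve_by_combination (f * g - i * d) (- (l * i))
  (l * f) lD_neq0 eqL eqO eqR); ring.
Qed.

Lemma backward_solutionR :
  Ry = - (a * (h * d + g * (l - e))) / (l * (h * f + i * (l - e))) * Lp
     + - (b * (h * d + g * (l - e))) / (l * (h * f + i * (l - e))) * Op
     + ((l - e) * (l ^+ 2 - g * c) - h * c * d) / (l * (h * f + i * (l - e))) * Rp.
Proof.
apply: (solve_by_combination (h * d + g * (l - e)) (l * h)
  (l * (l - e)) lD_neq0 eqL eqO eqR); ring.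
Qed.

End BackwardSolution.

Lemma ord3_cases (j : 'I_3) : j = i0 \/ j = i1 \/ j = i2.
Proof.
case: j => [[|[|[|//]]] ?]; [left | right; left | right; right]; exact: val_inj.
Qed.

Lemma mulmx3E {S : pzSemiRingType} {m n : nat} (M : 'M[S]_(m, 3)) (N : 'M[S]_(3, n)) j k :
  (M *m N) j k = M j i0 * N i0 k + M j i1 * N i1 k + M j i2 * N i2 k.
Proof.
by rewrite mxE !big_ord_recl big_ord0 addr0 addrA; congr (_ * _ + _ * _ + _ * _);
  congr (_ _ _); apply: val_inj.
Qed.

Section Walk.
Variable R : realType.
Local Notation C := (R[i]).

Lemma rowpartE (k j : 'I_3) (M : 'M[C]_3) (v : 'cV[C]_3) :
  (rowpart k M *m v) j 0 = if j == k then (M *m v) j 0 else 0.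
Proof. by rewrite !mulmx3E !mxE; case: (j == k); rewrite ?mul0r ?addr0. Qed.

Variables (U : coins R) (Psi : state R).

Lemma Us_L x : Us U Psi x i0 0 =
  ca U (x + 1) * Psi (x + 1) i0 0 + cb U (x + 1) * Psi (x + 1) i1 0
  + cc U (x + 1) * Psi (x + 1) i2 0.
Proof. by rewrite /Us ![fun_of_matrix (_ + _) _ _]mxE !rowpartE /= mulmx3E !addr0. Qed.

Lemma Us_O x : Us U Psi x i1 0 =
  cd U x * Psi x i0 0 + ce U x * Psi x i1 0 + cf U x * Psi x i2 0.
Proof. by rewrite /Us ![fun_of_matrix (_ + _) _ _]mxE !rowpartE /= mulmx3E add0r addr0. Qed.

Lemma Us_R x : Us U Psi x i2 0 =
  cg U (x - 1) * Psi (x - 1) i0 0 + ch U (x - 1) * Psi (x - 1) i1 0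
  + ci U (x - 1) * Psi (x - 1) i2 0.
Proof. by rewrite /Us ![fun_of_matrix (_ + _) _ _]mxE !rowpartE /= mulmx3E !add0r. Qed.

Lemma Us_scale (k : C) : Us U (fun x => k *: Psi x) = fun x => k *: Us U Psi x.
Proof. by apply: funext => x; rewrite /Us -!scalemxAr -!scalerDr. Qed.

Lemma phi_scale (k : C) : phi (fun x => k *: Psi x) = fun x => `|k| ^+ 2 * phi Psi x.
Proof. by apply: funext => x; rewrite /phi !mxE !normrM !exprMn !mulrDr. Qed.

Variable lam : C.
Hypothesis eigenPsi : forall x : int, Us U Psi x = lam *: Psi x.

Let eigen_coord x j : lam * Psi x j 0 = Us U Psi x j 0.
Proof. by rewrite eigenPsi mxE. Qed.

Lemma Tplus_step y : lam != 0 ->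
    ca U y * (lam - ce U y) + cb U y * cd U y != 0 ->
  Psi y = Tplus U lam y *m Psi (y - 1).
Proof.
move=> lam_neq0 D_neq0.
have eqL := eigen_coord (y - 1) i0; rewrite Us_L subrK in eqL.
have eqO := eigen_coord y i1; rewrite Us_O in eqO.
have eqR := eigen_coord y i2; rewrite Us_R in eqR.
apply/matrixP => j k; rewrite (ord1 k) mulmx3E /Tplus.
case: (ord3_cases j) => [|[|]] ->; rewrite !mxE /=.
- exact: forward_solutionL lam_neq0 D_neq0 eqL eqO eqR.
- exact: forward_solutionO lam_neq0 D_neq0 eqL eqO eqR.
- exact: forward_solutionR lam_neq0 eqL eqO eqR.
Qed.

Lemma Tminus_step y : lam != 0 ->
    ch U y * cf U y + ci U y * (lam - ce U y) != 0 ->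
  Psi y = Tminus U lam y *m Psi (y + 1).
Proof.
move=> lam_neq0 D_neq0.
have eqL := eigen_coord y i0; rewrite Us_L in eqL.
have eqO := eigen_coord y i1; rewrite Us_O in eqO.
have eqR := eigen_coord (y + 1) i2; rewrite Us_R addrK in eqR.
apply/matrixP => j k; rewrite (ord1 k) mulmx3E /Tminus.
case: (ord3_cases j) => [|[|]] ->; rewrite !mxE /=.
- exact: backward_solutionL lam_neq0 eqL eqO eqR.
- exact: backward_solutionO lam_neq0 D_neq0 eqL eqO eqR.
- exact: backward_solutionR lam_neq0 D_neq0 eqL eqO eqR.
Qed.

Lemma Tpos_solution : lam != 0 ->
    (forall y, ca U y * (lam - ce U y) + cb U y * cd U y != 0) ->
  forall n : nat, Psi n%:Z = Tpos U lam n *m Psi 0.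
Proof.
move=> lam_neq0 D_neq0; elim=> [|n IHn]; first by rewrite mul1mx.
rewrite (Tplus_step _ lam_neq0 (D_neq0 _)) /= -mulmxA -IHn.
by rewrite -[n.+1]addn1 PoszD addrK.
Qed.

Lemma Tneg_solution : lam != 0 ->
    (forall y, ch U y * cf U y + ci U y * (lam - ce U y) != 0) ->
  forall n : nat, Psi (- n%:Z) = Tneg U lam n *m Psi 0.
Proof.
move=> lam_neq0 D_neq0; elim=> [|n IHn]; first by rewrite mul1mx.
rewrite (Tminus_step _ lam_neq0 (D_neq0 _)) /= -mulmxA -IHn.
by rewrite -[n.+1]addn1 PoszD opprD addrNK.
Qed.

Lemma iter_Us_eigen n : iter n (Us U) Psi = fun x => lam ^+ n *: Psi x.
Proof.
elim: n => [|n IHn] /=.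
  by apply: funext => x; rewrite scale1r.
rewrite IHn Us_scale; apply: funext => x.
by rewrite eigenPsi scalerA exprSr.
Qed.

Lemma eigen_stationary : `|lam| = 1 -> Sigma_s U (phi Psi).
Proof.
move=> lam_unit; exists Psi; split=> // n.
rewrite iter_Us_eigen phi_scale normrX lam_unit !expr1n.
by apply: funext => x; rewrite mul1r.
Qed.

End Walk.

Theorem theorem1 (R : realType) (U : coins R) (lam : R[i]) (Psi : state R) :
  (forall y : int, unitary3 (U y)) ->
  `|lam| = 1 ->
  (forall y : int, ca U y * (lam - ce U y) + cb U y * cd U y != 0) ->
  (forall y : int, ch U y * cf U y + ci U y * (lam - ce U y) != 0) ->
  (forall x : int, Us U Psi x = lam *: Psi x) ->
  (forall n : nat, Psi n%:Z = Tpos U lam n *m Psi 0) /\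
  (forall n : nat, Psi (- n%:Z) = Tneg U lam n *m Psi 0) /\
  Sigma_s U (phi Psi).
Proof.
move=> _ lam_unit Dplus_neq0 Dminus_neq0 eigenPsi.
have lam_neq0 : lam != 0 by rewrite -normr_eq0 lam_unit oner_eq0.
split; [|split].
- exact: Tpos_solution.
- exact: Tneg_solution.
- exact: eigen_stationary.
Qed.
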